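(* For each $n\geq 1$, in $\mathbb{Z}[x_1,\dots,x_n]$ there is an equality of ideals \[ \langle h_1^n,h_2^n,\dots,h_n^n\rangle=\langle h_1^n,h_2^{n-1},h_3^{n-1},\dots,h_n^{n-1}\rangle . \]
   Context: For integers $0\leq a$ and $b\geq 1$, $h_a^b$ denotes the complete homogeneous symmetric polynomial of degree $a$ in the variables $x_1,\dots,x_b$, i.e. the sum of all monomials of degree $a$ in $x_1,\dots,x_b$. *)

From HB Require Import structures.
From mathcomp Require Import all_boot all_order all_algebra.
From mathcomp Require Import mpoly.
Set Implicit Arguments. Unset Strict Implicit. Unset Printing Implicit Defensive.
Import GRing.Theory.
Local Open Scope ring_scope.

(* h a b n : the complete homogeneous symmetric polynomial h_a^b of degree a
   in the first b variables x_1..x_b, viewed in {mpoly R[n]} (variables x_1..x_n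
   are 'X_0 .. 'X_(n-1)): the sum of all monomials of degree a supported on the
   first b variables. *)
Definition hcs (R : nzRingType) (n a b : nat) : {mpoly R[n]} :=
  \sum_(m : 'X_{1..n < a.+1} |
          (mdeg m == a) && [forall i : 'I_n, (b <= i)%N ==> (m i == 0%N)])
    'X_[(m : 'X_{1..n})].

Definition in_ideal (R : comNzRingType) (gs : seq R) (p : R) : Prop :=
  exists cs : seq R, size cs = size gs /\
    p = \sum_(i < size gs) cs`_i * gs`_i.

From HB Require Import structures.
From mathcomp Require Import all_boot all_order all_algebra.
From mathcomp Require Import mpoly.
From mathcomp Require Import zify.
Set Implicit Arguments. Unset Strict Implicit. Unset Printing Implicit Defensive.
Import GRing.Theory.
Local Open Scope ring_scope.

(* Splitting off the monomials that involve the last variable x_n gives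
   h_k^n = h_k^(n-1) + x_n h_(k-1)^n.  Hence h_k^(n-1) lies in the ideal of the
   h_j^n, and conversely, by induction on k, h_k^n lies in the ideal generated
   by h_1^n and the h_j^(n-1), j >= 2. *)

Section GeneratedIdeal.
Variable R : comNzRingType.
Implicit Types (gs hs : seq R) (c p q : R).

Lemma in_ideal0 gs : in_ideal gs 0.
Proof.
exists (nseq (size gs) 0); rewrite size_nseq; split => //.
by rewrite big1 // => i _; rewrite nth_nseq if_same mul0r.
Qed.

Lemma in_idealD gs p q : in_ideal gs p -> in_ideal gs q -> in_ideal gs (p + q).
Proof.
move=> [cs1 [_ ->]] [cs2 [_ ->]].
exists (mkseq (fun i => cs1`_i + cs2`_i) (size gs)); rewrite size_mkseq.
split=> //; rewrite -big_split; apply: eq_bigr => i _.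
by rewrite nth_mkseq // mulrDl.
Qed.

Lemma in_idealMl gs c p : in_ideal gs p -> in_ideal gs (c * p).
Proof.
move=> [cs [size_cs ->]]; exists (map ( *%R c) cs); rewrite size_map.
split=> //; rewrite mulr_sumr; apply: eq_bigr => i _.
by rewrite (nth_map 0) ?size_cs // mulrA.
Qed.

Lemma in_idealMr gs c p : in_ideal gs p -> in_ideal gs (p * c).
Proof. by rewrite mulrC; apply: in_idealMl. Qed.

Lemma in_ideal_mem gs g : g \in gs -> in_ideal gs g.
Proof.
move=> gs_g; have lt_g : (index g gs < size gs)%N by rewrite index_mem.
exists (mkseq (fun j => (j == index g gs)%:R) (size gs)); rewrite size_mkseq.
split=> //; rewrite (bigD1 (Ordinal lt_g)) //= big1 ?addr0.
  by rewrite nth_mkseq // eqxx mul1r nth_index.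
move=> j; rewrite -(inj_eq val_inj) /= => /negbTE neq_j.
by rewrite nth_mkseq // neq_j mul0r.
Qed.

Lemma in_ideal_trans gs hs p :
  {in gs, forall g, in_ideal hs g} -> in_ideal gs p -> in_ideal hs p.
Proof.
move=> gs_hs [cs [_ ->]]; apply: (big_ind (in_ideal hs)).
- exact: in_ideal0.
- exact: in_idealD.
by move=> i _; apply/in_idealMl/gs_hs/mem_nth.
Qed.

Lemma in_ideal_recurrence (f g : nat -> R) x N p :
  (forall k, f k.+2 = g k.+2 + f k.+1 * x) ->
  in_ideal [seq f k | k <- iota 1 N.+1] p <->
  in_ideal (f 1%N :: [seq g k | k <- iota 2 N]) p.
Proof.
move=> fS; set I := [seq f k | k <- _]; set J := _ :: _.
have I_f k : (0 < k <= N.+1)%N -> f k \in I.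
  by move=> k_bound; apply: map_f; rewrite mem_iota; lia.
have J_f k : (0 < k <= N.+1)%N -> in_ideal J (f k).
  elim: k => [//|[|k] IHk] k_bound.
    by apply/in_ideal_mem/mem_head.
  rewrite fS; apply: in_idealD; last by apply/in_idealMr/IHk; lia.
  by apply/in_ideal_mem/mem_behead/map_f; rewrite mem_iota; lia.
split; apply: in_ideal_trans => h.
  by move=> /mapP[k]; rewrite mem_iota => k_bound ->; apply: J_f; lia.
rewrite inE => /predU1P[->|/mapP[[|[|k]]]]; rewrite ?mem_iota //.
  by apply/in_ideal_mem/I_f.
move=> k_bound ->; rewrite -[g _]addr0 -(subrr (f k.+1 * x)) addrA -fS.
apply: in_idealD; first by apply/in_ideal_mem/I_f; lia.
by rewrite -mulrN; apply/in_idealMr/in_ideal_mem/I_f; lia.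
Qed.

End GeneratedIdeal.

Section CompleteHomogeneous.
Variables (R : nzRingType) (n : nat).
Implicit Types (m : 'X_{1..n}) (p : {mpoly R[n]}).

Definition mnm_below (b : nat) m : bool :=
  [forall j : 'I_n, (b <= j)%N ==> (m j == 0%N)].

Lemma mnm_belowS (i : 'I_n) m :
  mnm_below i m = mnm_below i.+1 m && (m i == 0%N).
Proof.
apply/forallP/andP => [below_i|[/forallP below_iS /eqP mi0] j].
  by split; [apply/forallP => j; apply/implyP => /ltnW/(implyP (below_i j))|
             exact: (implyP (below_i i))].
apply/implyP; rewrite leq_eqVlt => /orP[/eqP/val_inj <-|]; first by rewrite mi0.
exact: (implyP (below_iS j)).
Qed.

Lemma mnm_below_addU (i : 'I_n) b m :
  (i < b)%N -> mnm_below b (U_(i) + m)%MM = mnm_below b m.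
Proof.
move=> lt_ib; apply: eq_forallb => j; have [le_bj|] //= := leqP b j.
have /negbTE neq_ij : i != j by apply: contraTneq le_bj => <-; rewrite -ltnNge.
by rewrite mnmDE mnm1E neq_ij.
Qed.

Lemma mcoeff_hcs a b m :
  (hcs R n a b)@_m = ((mdeg m == a) && mnm_below b m)%:R.
Proof.
rewrite /hcs raddf_sum /=; under eq_bigr do rewrite mcoeffX.
case: (boolP (_ && _)) => [hcs_m | not_hcs_m].
  have lt_m : (mdeg m < a.+1)%N by case/andP: hcs_m => /eqP ->.
  rewrite (bigD1 (BMultinom lt_m)) //= eqxx big1 ?addr0 // => m' /andP[_].
  by rewrite -[m' == _](inj_eq val_inj) => /negbTE ->.
rewrite big1 // => m' hcs_m'; case: eqP => // eq_m.
by rewrite -eq_m hcs_m' in not_hcs_m.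
Qed.

Lemma mcoeffMX_eq0 p m k : ~~ (m <= k)%MM -> (p * 'X_[m])@_k = 0.
Proof.
move=> not_le_mk; apply: memN_msupp_eq0; rewrite (perm_mem (msuppMX p m)).
by apply: contra not_le_mk => /mapP[m' _ ->]; apply: lem_addr.
Qed.

Lemma hcsS a (i : 'I_n) :
  hcs R n a.+1 i.+1 = hcs R n a.+1 i + hcs R n a i.+1 * 'X_i.
Proof.
apply/mpolyP => m; rewrite mcoeffD !mcoeff_hcs.
case: (boolP (U_(i) <= m)%MM) => [le_Um | not_le_Um]; last first.
  rewrite mcoeffMX_eq0 // addr0 (mnm_belowS i).
  by move: not_le_Um; rewrite lep1mP negbK => ->; rewrite andbT.
rewrite -(submK le_Um) addmC mcoeffMX mcoeff_hcs.
rewrite mnm_belowS mnmDE mnm1E eqxx /= add1n !andbF add0r.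
by rewrite mdegD mdeg1 add1n eqSS mnm_below_addU.
Qed.

End CompleteHomogeneous.

Theorem proposition4p2 (n : nat) (hn : (1 <= n)%N) (p : {mpoly int[n]}) :
  in_ideal [seq hcs int n i n | i <- iota 1 n] p <->
  in_ideal (hcs int n 1 n :: [seq hcs int n i n.-1 | i <- iota 2 n.-1]) p.
Proof.
case: n hn p => [//|n] _ p.
apply: (in_ideal_recurrence (f := fun k => hcs int n.+1 k n.+1)
                            (g := fun k => hcs int n.+1 k n)).
exact: (fun k => hcsS _ k.+1 ord_max).
Qed.
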